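(* (Completeness) For every set $\Phi\subseteq\mathcal{L}_T$ and every $\alpha\in\mathcal{L}_T$: if $\Phi\models\alpha$, then $\Phi\vdash\alpha$ in SBTrust.
   Context: Propositional formulas: $\varphi::=\bot\mid p\mid\varphi\land\varphi\mid\varphi\lor\varphi\mid\varphi\to\varphi\mid\varphi\leftrightarrow\varphi\mid\neg\varphi$ over a countable set of variables. $\mathcal{L}_T$: $\alpha::=\varphi\mid\varphi\rightsquigarrow\varphi\mid B(\alpha)\mid\alpha*\alpha\mid\neg\alpha$ ($\varphi$ propositional, $*\in\{\land,\lor,\to,\leftrightarrow\}$). SBTrust is the Hilbert system (rule applications must yield formulas of $\mathcal{L}_T$; $\varphi,\psi,\chi,\varphi_i,\psi_i$ propositional; $\alpha,\beta\in\mathcal{L}_T$) with: all classical tautologies over $\mathcal{L}_T$ and Modus Ponens; $\mathbf{ID}$: $\varphi\rightsquigarrow\varphi$; $\mathbf{ST}$: $(\varphi\rightsquigarrow\bot)\to\neg\varphi$; $\mathbf{SH}$: $((\psi\land\chi)\rightsquigarrow\varphi)\to(\psi\rightsquigarrow(\chi\to\varphi))$; $\mathbf{LL+}$: $(\neg(\varphi\leftrightarrow\psi)\rightsquigarrow\bot)\to((\varphi\rightsquigarrow\chi)\leftrightarrow(\psi\rightsquigarrow\chi))$; rule $\mathbf{RCK}$: from $(\varphi_1\land\dots\land\varphi_n)\to\varphi_{n+1}$ infer $((\psi\rightsquigarrow\varphi_1)\land\dots\land(\psi\rightsquigarrow\varphi_n))\to(\psi\rightsquigarrow\varphi_{n+1})$;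 rule $\mathbf{S5_F}$: from $(\ell_1\land\dots\land\ell_n)\to\chi$ infer $(\ell_1\land\dots\land\ell_n)\to(\neg\chi\rightsquigarrow\bot)$, each $\ell_j$ being $\varphi_j\rightsquigarrow\psi_j$ or $\neg(\varphi_j\rightsquigarrow\psi_j)$, $\chi$ propositional; $\mathbf{KB}$: $B(\alpha\to\beta)\to(B(\alpha)\to B(\beta))$; $\mathbf{DB}$: $B(\alpha)\to\neg B(\neg\alpha)$; $\mathbf{4B}$: $B(\alpha)\to B(B(\alpha))$; necessitation for $B$. $\Phi\vdash\alpha$ is derivability from assumptions in the usual sense. A Trust model is $\mathcal{M}=\langle S,(S_i)_{i\in I},(\succeq_i)_{i\in I},R,V\rangle$: $R\subseteq S\times S$ serial and transitive; $(S_i)$ a partition of $S$; $\succeq_i\subseteq S_i\times S_i$ arbitrary; $V$ maps variables to subsets of $S$; and for each $i$ and propositional $\varphi$, $\|\varphi\|_i\neq\emptyset\Rightarrow\mathit{most}(\|\varphi\|_i)\neq\emptyset$, with $\|\varphi\|_i=\{v\in S_i:\mathcal{M},v\models\varphi\}$, $\mathit{most}(X)=\{s\in X:\forall v\in X\,(v\succeq_i s\Rightarrow s\succeq_i v)\}$. Truth: $s\models p$ iff $s\in V(p)$; Boolean clauses as usual; $s\models\varphi\rightsquigarrow\psi$ iff $\mathit{most}(\|\varphi\|_i)\subseteq\|\psi\|_i$ where $s\in S_i$; $s\models B(\alpha)$ iff $v\models\alpha$ for every $v$ with $sRv$. $\Phi\models\alpha$: in every Trust model, every state satisfying all of $\Phi$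 satisfies $\alpha$. *)

From Stdlib Require Import List.
Import ListNotations.

Inductive pform : Type :=
| PBot : pform
| PVar : nat -> pform
| PAnd : pform -> pform -> pform
| POr  : pform -> pform -> pform
| PImp : pform -> pform -> pform
| PIff : pform -> pform -> pform
| PNeg : pform -> pform.

(* Propositional formulas are embedded via [emb] below
   (so that each formula of L_T has a unique representation): the
   propositional constructors are shared with the L_T connectives. *)
Inductive tform : Type :=
| TBot : tform
| TVar : nat -> tform
| TAnd : tform -> tform -> tform
| TOr  : tform -> tform -> tform
| TImp : tform -> tform -> tform
| TIff : tform -> tform -> tform
| TNeg : tform -> tform
| TCond : pform -> pform -> tform
| TB : tform -> tform.

Fixpoint emb (p : pform) : tform :=
  match p with
  | PBot => TBot
  | PVar n => TVar n
  | PAnd a b => TAnd (emb a) (emb b)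
  | POr a b => TOr (emb a) (emb b)
  | PImp a b => TImp (emb a) (emb b)
  | PIff a b => TIff (emb a) (emb b)
  | PNeg a => TNeg (emb a)
  end.

Fixpoint pconj (x : pform) (l : list pform) : pform :=
  match l with
  | [] => x
  | y :: l' => PAnd x (pconj y l')
  end.

Fixpoint tconj (x : tform) (l : list tform) : tform :=
  match l with
  | [] => x
  | y :: l' => TAnd x (tconj y l')
  end.

Fixpoint teval (v : tform -> bool) (a : tform) : bool :=
  match a with
  | TBot => false
  | TVar _ => v a
  | TAnd x y => teval v x && teval v y
  | TOr x y => teval v x || teval v y
  | TImp x y => implb (teval v x) (teval v y)
  | TIff x y => Bool.eqb (teval v x) (teval v y)
  | TNeg x => negb (teval v x)
  | TCond _ _ => v a
  | TB _ => v a
  end.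

Definition tautology (a : tform) : Prop := forall v, teval v a = true.

Definition is_literal (l : tform) : Prop :=
  exists phi psi, l = TCond phi psi \/ l = TNeg (TCond phi psi).

Inductive Thm : tform -> Prop :=
| Thm_taut a : tautology a -> Thm a
| Thm_MP a b : Thm (TImp a b) -> Thm a -> Thm b
| Thm_ID phi : Thm (TCond phi phi)
| Thm_ST phi : Thm (TImp (TCond phi PBot) (TNeg (emb phi)))
| Thm_SH phi psi chi :
    Thm (TImp (TCond (PAnd psi chi) phi) (TCond psi (PImp chi phi)))
| Thm_LLp phi psi chi :
    Thm (TImp (TCond (PNeg (PIff phi psi)) PBot)
              (TIff (TCond phi chi) (TCond psi chi)))
| Thm_RCK psi phi1 phis phi' :
    Thm (emb (PImp (pconj phi1 phis) phi')) ->
    Thm (TImp (tconj (TCond psi phi1) (map (TCond psi) phis)) (TCond psi phi'))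
| Thm_S5F l1 ls chi :
    is_literal l1 -> Forall is_literal ls ->
    Thm (TImp (tconj l1 ls) (emb chi)) ->
    Thm (TImp (tconj l1 ls) (TCond (PNeg chi) PBot))
| Thm_KB a b : Thm (TImp (TB (TImp a b)) (TImp (TB a) (TB b)))
| Thm_DB a : Thm (TImp (TB a) (TNeg (TB (TNeg a))))
| Thm_4B a : Thm (TImp (TB a) (TB (TB a)))
| Thm_Nec a : Thm a -> Thm (TB a).

Inductive derivable (Phi : tform -> Prop) : tform -> Prop :=
| der_ass a : Phi a -> derivable Phi a
| der_thm a : Thm a -> derivable Phi a
| der_MP a b : derivable Phi (TImp a b) -> derivable Phi a -> derivable Phi b.

Fixpoint psat {S : Type} (V : nat -> S -> Prop) (s : S) (p : pform) : Prop :=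
  match p with
  | PBot => False
  | PVar n => V n s
  | PAnd a b => psat V s a /\ psat V s b
  | POr a b => psat V s a \/ psat V s b
  | PImp a b => psat V s a -> psat V s b
  | PIff a b => (psat V s a <-> psat V s b)
  | PNeg a => ~ psat V s a
  end.

(* ||phi||_i : states of the block S_i satisfying phi.  The partition
   (S_i)_{i in I} is given by the map [cls] sending a state to its block. *)
Definition ext {S I : Type} (cls : S -> I) (V : nat -> S -> Prop)
  (i : I) (phi : pform) (s : S) : Prop := cls s = i /\ psat V s phi.

(* most(X) w.r.t. the relation  pref i  (v >=_i s  is  pref i v s). *)
Definition most {S I : Type} (pref : I -> S -> S -> Prop) (i : I)
  (X : S -> Prop) (s : S) : Prop :=
  X s /\ forall v, X v -> pref i v s -> pref i s v.

Record TrustModel : Type := {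
  St : Type;
  Ix : Type;
  cls : St -> Ix;
  pref : Ix -> St -> St -> Prop;  (* only used on S_i x S_i *)
  Rel : St -> St -> Prop;
  Val : nat -> St -> Prop;
  Rel_serial : forall s, exists v, Rel s v;
  Rel_trans : forall s t u, Rel s t -> Rel t u -> Rel s u;
  most_nonempty : forall (i : Ix) (phi : pform),
      (exists s, ext cls Val i phi s) ->
      exists s, most pref i (ext cls Val i phi) s
}.

Fixpoint tsat (M : TrustModel) (s : St M) (a : tform) : Prop :=
  match a with
  | TBot => False
  | TVar n => Val M n s
  | TAnd x y => tsat M s x /\ tsat M s y
  | TOr x y => tsat M s x \/ tsat M s y
  | TImp x y => tsat M s x -> tsat M s y
  | TIff x y => (tsat M s x <-> tsat M s y)
  | TNeg x => ~ tsat M s x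
  | TCond phi psi =>
      forall v, most (pref M) (cls M s) (ext (cls M) (Val M) (cls M s) phi) v ->
                ext (cls M) (Val M) (cls M s) psi v
  | TB x => forall v, Rel M s v -> tsat M v x
  end.

Definition entails (Phi : tform -> Prop) (a : tform) : Prop :=
  forall (M : TrustModel) (s : St M),
    (forall b, Phi b -> tsat M s b) -> tsat M s a.

(* Canonical model.  A state is a maximal consistent set x with a tag
   c : pform; states share a block when their sets contain the same
   conditionals, and B is interpreted by the canonical relation.  Call x normal
   for phi when th is in x whenever phi ~> th is.  The preference makes the
   most phi-states of a block exactly the states normal for their tag c in
   which phi implies c throughout the block.  Rule S5_F turns "throughout the
   block" into a formula of x, and then LL+ and SH show that such states are
   normal for phi; conversely a phi-state normal for phi and tagged phi is
   most.  This is the truth lemma for ~>; completeness then follows by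
   Lindenbaum's lemma. *)
From Stdlib Require Import List Classical ClassicalEpsilon.
From Stdlib Require Import FunctionalExtensionality PropExtensionality Cantor.
Import ListNotations.

Ltac solve_taut :=
  intro; simpl;
  repeat match goal with |- context [teval ?v ?x] => destruct (teval v x) end;
  reflexivity.

Definition adjoin (G : tform -> Prop) (c : tform) : tform -> Prop :=
  fun b => b = c \/ G b.

Lemma derivable_cut (G H : tform -> Prop) (a : tform) :
  (forall b, G b -> derivable H b) -> derivable G a -> derivable H a.
Proof. intro HG; induction 1; auto using der_thm; eapply der_MP; eauto. Qed.

Lemma derivable_weaken (G H : tform -> Prop) (a : tform) :
  (forall b, G b -> H b) -> derivable G a -> derivable H a.
Proof. intro HGH; apply derivable_cut; auto using der_ass. Qed.

Lemma derivable_taut (G : tform -> Prop) (a : tform) : tautology a -> derivable G a.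
Proof. intro T; apply der_thm, Thm_taut, T. Qed.

Lemma derivable_taut_MP (G : tform -> Prop) (a b : tform) :
  tautology (TImp a b) -> derivable G a -> derivable G b.
Proof. intros T D; apply der_MP with a; auto using derivable_taut. Qed.

Lemma derivable_taut_MP2 (G : tform -> Prop) (a b c : tform) :
  tautology (TImp a (TImp b c)) -> derivable G a -> derivable G b -> derivable G c.
Proof.
  intros T Da Db; apply der_MP with b; auto.
  apply der_MP with a; auto using derivable_taut.
Qed.

Lemma deduction (G : tform -> Prop) (c a : tform) :
  derivable (adjoin G c) a -> derivable G (TImp c a).
Proof.
  induction 1 as [a [->|Ha]|a Ta|a b _ IH1 _ IH2].
  - apply derivable_taut; solve_taut.
  - apply derivable_taut_MP with a; [solve_taut | apply der_ass, Ha].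
  - apply derivable_taut_MP with a; [solve_taut | apply der_thm, Ta].
  - apply derivable_taut_MP2 with (TImp c (TImp a b)) (TImp c a); auto; solve_taut.
Qed.

Lemma derivable_finite (G : tform -> Prop) (a : tform) :
  derivable G a -> exists L, (forall b, In b L -> G b) /\ derivable (fun b => In b L) a.
Proof.
  induction 1 as [a Ha|a Ta|a b _ [L1 [HL1 D1]] _ [L2 [HL2 D2]]].
  - exists [a]; split; [intros b [<-|[]]; auto | apply der_ass; left; auto].
  - exists []; split; [intros b [] | apply der_thm, Ta].
  - exists (L1 ++ L2); split.
    + intros c Hc; apply in_app_or in Hc as [Hc|Hc]; auto.
    + apply der_MP with a; eapply derivable_weaken; eauto; intros; apply in_or_app; auto.
Qed.

Lemma Thm_of_derivable_empty (a : tform) : derivable (fun _ => False) a -> Thm a.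
Proof. induction 1; [contradiction | auto | eapply Thm_MP; eauto]. Qed.

Lemma teval_tconj v (l : tform) (L : list tform) :
  teval v (tconj l L) = true -> teval v l = true /\ forall b, In b L -> teval v b = true.
Proof.
  revert l; induction L as [|c L IH]; simpl; intros l H; [split; [auto | intros _ []]|].
  apply andb_prop in H as [Hl H]; apply IH in H as [Hc HL].
  split; [auto | intros b [<-|Hb]; auto].
Qed.

Lemma Thm_tconj_of_derivable (l : tform) (L : list tform) (a : tform) :
  derivable (fun b => In b L) a -> Thm (TImp (tconj l L) a).
Proof.
  intro D; apply Thm_of_derivable_empty, deduction.
  revert D; apply derivable_cut; intros b Hb.
  apply derivable_taut_MP with (tconj l L); [|apply der_ass; left; auto].
  intro v; simpl; destruct (teval v (tconj l L)) eqn:E; simpl; auto.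
  apply (teval_tconj v l L E), Hb.
Qed.

Definition consistent (G : tform -> Prop) : Prop := ~ derivable G TBot.
Definition mcs (G : tform -> Prop) : Prop := consistent G /\ forall a, G a \/ G (TNeg a).

Lemma consistent_adjoin_neg (G : tform -> Prop) (a : tform) :
  ~ derivable G a -> consistent (adjoin G (TNeg a)).
Proof.
  intros Na D; apply deduction in D; apply Na.
  apply derivable_taut_MP with (TImp (TNeg a) TBot); auto; solve_taut.
Qed.

Lemma consistent_adjoin_or_neg (G : tform -> Prop) (e : tform) :
  consistent G -> ~ consistent (adjoin G e) -> consistent (adjoin G (TNeg e)).
Proof.
  intros HG He D; apply NNPP in He; apply deduction in He, D; apply HG.
  apply derivable_taut_MP2 with (TImp e TBot) (TImp (TNeg e) TBot); auto; solve_taut.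
Qed.

Section MaximalConsistent.
Variable x : tform -> Prop.
Hypothesis Hx : mcs x.

Lemma mcs_derivable a : derivable x a -> x a.
Proof.
  intro D; destruct (proj2 Hx a) as [Ha|Ha]; auto; exfalso; apply (proj1 Hx).
  apply derivable_taut_MP2 with a (TNeg a); [solve_taut | auto | apply der_ass, Ha].
Qed.

Lemma mcs_Thm a : Thm a -> x a.
Proof. intro; apply mcs_derivable, der_thm; auto. Qed.

Lemma mcs_MP a b : x (TImp a b) -> x a -> x b.
Proof. intros; apply mcs_derivable; apply der_MP with a; apply der_ass; auto. Qed.

Lemma mcs_taut a b : tautology (TImp a b) -> x a -> x b.
Proof. intros; apply mcs_derivable, derivable_taut_MP with a; auto using der_ass. Qed.

Lemma mcs_taut2 a b c : tautology (TImp a (TImp b c)) -> x a -> x b -> x c.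
Proof. intros; apply mcs_derivable, derivable_taut_MP2 with a b; auto using der_ass. Qed.

Lemma mcs_bot : ~ x TBot.
Proof. intro; apply (proj1 Hx), der_ass; auto. Qed.

Lemma mcs_neg a : x (TNeg a) <-> ~ x a.
Proof.
  split.
  - intros Hn Ha; apply mcs_bot, (mcs_taut2 a (TNeg a)); auto; solve_taut.
  - intro Na; destruct (proj2 Hx a); tauto.
Qed.

Lemma mcs_imp a b : x (TImp a b) <-> (x a -> x b).
Proof.
  split; [intros; eapply mcs_MP; eauto|].
  intro H; destruct (proj2 Hx a) as [Ha|Ha].
  - apply (mcs_taut b); auto; solve_taut.
  - apply (mcs_taut (TNeg a)); auto; solve_taut.
Qed.

Lemma mcs_and a b : x (TAnd a b) <-> x a /\ x b.
Proof.
  split.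
  - intro H; split; apply (mcs_taut (TAnd a b)); auto; solve_taut.
  - intros [Ha Hb]; apply (mcs_taut2 a b); auto; solve_taut.
Qed.

Lemma mcs_or a b : x (TOr a b) <-> x a \/ x b.
Proof.
  split.
  - intro H; destruct (proj2 Hx a) as [Ha|Ha]; auto.
    right; apply (mcs_taut2 (TOr a b) (TNeg a)); auto; solve_taut.
  - intros [H|H]; [apply (mcs_taut a) | apply (mcs_taut b)]; auto; solve_taut.
Qed.

Lemma mcs_iff a b : x (TIff a b) <-> (x a <-> x b).
Proof.
  split.
  - intro H; split; intro H1; [apply (mcs_taut2 (TIff a b) a) | apply (mcs_taut2 (TIff a b) b)];
      auto; solve_taut.
  - intros E; destruct (proj2 Hx a) as [Ha|Ha].
    + apply (mcs_taut2 a b); [solve_taut | auto | tauto].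
    + assert (Hb : x (TNeg b)) by (apply mcs_neg; rewrite mcs_neg in Ha; tauto).
      apply (mcs_taut2 (TNeg a) (TNeg b)); auto; solve_taut.
Qed.

Lemma mcs_tconj l L : x l -> (forall b, In b L -> x b) -> x (tconj l L).
Proof.
  revert l; induction L as [|b L IH]; simpl; intros l Hl HL; auto.
  apply mcs_and; auto.
Qed.

End MaximalConsistent.

Definition code2 (m n : nat) : nat := to_nat (m, n).
Arguments code2 : simpl never.

Lemma code2_inj m n m' n' : code2 m n = code2 m' n' -> m = m' /\ n = n'.
Proof. unfold code2; intro E; apply to_nat_inj in E; injection E; auto. Qed.

Fixpoint pcode (p : pform) : nat :=
  match p with
  | PBot => code2 0 0
  | PVar n => code2 1 n
  | PAnd a b => code2 2 (code2 (pcode a) (pcode b))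
  | POr a b => code2 3 (code2 (pcode a) (pcode b))
  | PImp a b => code2 4 (code2 (pcode a) (pcode b))
  | PIff a b => code2 5 (code2 (pcode a) (pcode b))
  | PNeg a => code2 6 (pcode a)
  end.

Fixpoint tcode (a : tform) : nat :=
  match a with
  | TBot => code2 0 0
  | TVar n => code2 1 n
  | TAnd a b => code2 2 (code2 (tcode a) (tcode b))
  | TOr a b => code2 3 (code2 (tcode a) (tcode b))
  | TImp a b => code2 4 (code2 (tcode a) (tcode b))
  | TIff a b => code2 5 (code2 (tcode a) (tcode b))
  | TNeg a => code2 6 (tcode a)
  | TCond p q => code2 7 (code2 (pcode p) (pcode q))
  | TB a => code2 8 (tcode a)
  end.

Ltac code2_inj_tac :=
  repeat match goal with H : code2 _ _ = code2 _ _ |- _ => apply code2_inj in H as [] end;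
  try discriminate.

Lemma pcode_inj p q : pcode p = pcode q -> p = q.
Proof. revert q; induction p; destruct q; simpl; intro; code2_inj_tac; f_equal; auto. Qed.

Lemma tcode_inj a b : tcode a = tcode b -> a = b.
Proof.
  revert b; induction a; destruct b; simpl; intro; code2_inj_tac; f_equal; auto using pcode_inj.
Qed.

Definition tdecode (n : nat) : tform := epsilon (inhabits TBot) (fun a => tcode a = n).

Lemma tdecode_tcode a : tdecode (tcode a) = a.
Proof. apply tcode_inj, (epsilon_spec (inhabits TBot) (fun b => tcode b = tcode a)); eauto. Qed.

Definition extend (G : tform -> Prop) (e : tform) : tform -> Prop :=
  if excluded_middle_informative (consistent (adjoin G e)) then adjoin G e else adjoin G (TNeg e).

Lemma extend_consistent G e : consistent G -> consistent (extend G e).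
Proof.
  unfold extend; destruct excluded_middle_informative; auto using consistent_adjoin_or_neg.
Qed.

Lemma extend_incl G e b : G b -> extend G e b.
Proof. unfold extend; destruct excluded_middle_informative; right; auto. Qed.

Lemma extend_decides G e : extend G e e \/ extend G e (TNeg e).
Proof. unfold extend; destruct excluded_middle_informative; [left | right]; left; auto. Qed.

Fixpoint chain (G : tform -> Prop) (n : nat) : tform -> Prop :=
  match n with
  | 0 => G
  | S n => extend (chain G n) (tdecode n)
  end.

Lemma chain_mono G m n b : m <= n -> chain G m b -> chain G n b.
Proof. induction 1; simpl; auto using extend_incl. Qed.

Lemma chain_consistent G n : consistent G -> consistent (chain G n).
Proof. intro HG; induction n; simpl; auto using extend_consistent. Qed.

Lemma derivable_chain_union G a :
  derivable (fun b => exists n, chain G n b) a -> exists n, derivable (chain G n) a.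
Proof.
  induction 1 as [a [n Ha]|a Ta|a b _ [m Dm] _ [n Dn]].
  - exists n; apply der_ass, Ha.
  - exists 0; apply der_thm, Ta.
  - exists (max m n); apply der_MP with a.
    + revert Dm; apply derivable_weaken; intro; apply chain_mono, PeanoNat.Nat.le_max_l.
    + revert Dn; apply derivable_weaken; intro; apply chain_mono, PeanoNat.Nat.le_max_r.
Qed.

Lemma lindenbaum G : consistent G -> exists x, (forall b, G b -> x b) /\ mcs x.
Proof.
  intro HG; exists (fun b => exists n, chain G n b); split; [|split].
  - intros b Hb; exists 0; auto.
  - intro D; apply derivable_chain_union in D as [n D].
    exact (chain_consistent G n HG D).
  - intro a; rewrite <- (tdecode_tcode a).
    destruct (extend_decides (chain G (tcode a)) (tdecode (tcode a))); [left | right];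
      exists (S (tcode a)); auto.
Qed.

Lemma lindenbaum_not_derivable G a :
  ~ derivable G a -> exists x, mcs x /\ (forall b, G b -> x b) /\ ~ x a.
Proof.
  intro Na; destruct (lindenbaum _ (consistent_adjoin_neg G a Na)) as [x [Hsub Hx]].
  exists x; split; [auto | split; [intros; apply Hsub; right; auto |]].
  apply (mcs_neg x Hx), Hsub; left; auto.
Qed.

Definition literals (x : tform -> Prop) : tform -> Prop := fun a => x a /\ is_literal a.

Definition same_conds (y x : tform -> Prop) : Prop :=
  forall phi psi, y (TCond phi psi) <-> x (TCond phi psi).

Definition normal (x : tform -> Prop) (phi : pform) : Prop :=
  forall th, x (TCond phi th) -> x (emb th).

Lemma mcs_cond_bot x phi : mcs x -> x (emb phi) -> ~ x (TCond phi PBot).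
Proof.
  intros Hx Hphi Hbot.
  exact (proj1 (mcs_neg x Hx _) (mcs_MP x Hx _ _ (mcs_Thm x Hx _ (Thm_ST phi)) Hbot) Hphi).
Qed.

Lemma not_normal_bot x : mcs x -> ~ normal x PBot.
Proof. intros Hx Hnorm; apply (mcs_bot x Hx), (Hnorm PBot), (mcs_Thm x Hx), Thm_ID. Qed.

Lemma same_conds_of_literals x y :
  mcs x -> mcs y -> (forall a, literals x a -> y a) -> same_conds y x.
Proof.
  intros Hx Hy H phi psi; split; intro Hc.
  - destruct (proj2 Hx (TCond phi psi)) as [|Hn]; auto; exfalso.
    assert (Hlit : literals x (TNeg (TCond phi psi))).
    { split; [auto | exists phi, psi; right; auto]. }
    exact (proj1 (mcs_neg y Hy _) (H _ Hlit) Hc).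
  - apply H; split; [auto | exists phi, psi; left; auto].
Qed.

Section Block.
Variable x : tform -> Prop.
Hypothesis Hx : mcs x.

Lemma neg_cond_bot_of_global chi : derivable (literals x) (emb chi) -> x (TCond (PNeg chi) PBot).
Proof.
  intro D; apply derivable_finite in D as [L [HL D]].
  (* S5_F wants a nonempty conjunction of literals; ID supplies PBot ~> PBot. *)
  pose (top := TCond PBot PBot).
  assert (Htop : is_literal top) by (exists PBot, PBot; left; auto).
  assert (HlitL : Forall is_literal L) by (apply Forall_forall; intros b Hb; apply HL, Hb).
  apply (mcs_MP x Hx (tconj top L)).
  - apply mcs_Thm; auto; apply Thm_S5F; auto using Thm_tconj_of_derivable.
  - apply mcs_tconj; auto; [apply mcs_Thm, Thm_ID; auto | intros b Hb; apply HL, Hb].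
Qed.

Lemma cond_equiv_of_global phi phi' th :
  derivable (literals x) (emb (PIff phi phi')) -> (x (TCond phi th) <-> x (TCond phi' th)).
Proof.
  intro D; apply (mcs_iff x Hx), (mcs_MP x Hx _ _ (mcs_Thm x Hx _ (Thm_LLp phi phi' th))).
  apply neg_cond_bot_of_global, D.
Qed.

Lemma cond_mono phi a b : Thm (emb (PImp a b)) -> x (TCond phi a) -> x (TCond phi b).
Proof. intro T; apply (mcs_MP x Hx), (mcs_Thm x Hx), (Thm_RCK phi a [] b T). Qed.

Lemma cond_and phi a b c :
  Thm (emb (PImp (PAnd a b) c)) -> x (TCond phi a) -> x (TCond phi b) -> x (TCond phi c).
Proof.
  intros T Ha Hb; apply (mcs_MP x Hx _ _ (mcs_Thm x Hx _ (Thm_RCK phi a [b] c T))).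
  apply (mcs_and x Hx); auto.
Qed.

Lemma cond_of_global phi psi : derivable (literals x) (emb psi) -> x (TCond phi psi).
Proof.
  intro D; apply (cond_equiv_of_global (PAnd phi psi)).
  - apply derivable_taut_MP with (emb psi); auto; solve_taut.
  - apply cond_mono with (PAnd phi psi); [apply Thm_taut; solve_taut | apply mcs_Thm, Thm_ID; auto].
Qed.

(* What a phi-state of the block of x that is normal for phi must contain. *)
Definition cond_theory (phi : pform) : tform -> Prop :=
  fun b => literals x b \/ exists chi, b = emb chi /\ x (TCond phi chi).

Lemma cond_of_derivable phi psi : derivable (cond_theory phi) (emb psi) -> x (TCond phi psi).
Proof.
  intro D; apply derivable_finite in D as [L [HL D]].
  apply (derivable_weaken _ (fun b => literals x b \/ In b L)) in D; [|auto].
  revert psi D; induction L as [|b L IH]; intros psi D.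
  - apply cond_of_global; revert D; apply derivable_weaken; intros c [Hc|[]]; auto.
  - assert (HL' : forall c, In c L -> cond_theory phi c) by (intros; apply HL; right; auto).
    destruct (HL b (or_introl eq_refl)) as [Hb|[chi [-> Hchi]]].
    + apply IH; auto; revert D; apply derivable_weaken; intros c [Hc|[<-|Hc]]; auto.
    + apply cond_and with chi (PImp chi psi); [apply Thm_taut; solve_taut | auto |].
      apply IH; auto; apply deduction; revert D; apply derivable_weaken.
      intros c [Hc|[<-|Hc]]; [right | left | right]; auto.
Qed.

Lemma cond_witness phi psi : ~ x (TCond phi psi) ->
  exists y, mcs y /\ same_conds y x /\ normal y phi /\ y (emb phi) /\ ~ y (emb psi).
Proof.
  intro N; destruct (lindenbaum_not_derivable (cond_theory phi) (emb psi)) as [y [Hy [Hsub Ny]]].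
  { intro D; apply N, cond_of_derivable, D. }
  assert (Hblk : same_conds y x).
  { apply same_conds_of_literals; auto; intros; apply Hsub; left; auto. }
  assert (Hcons : forall th, x (TCond phi th) -> y (emb th)) by (intros; apply Hsub; right; eauto).
  exists y; split; [auto | split; [auto | split; [| split; [| auto]]]].
  - intros th Hth; apply Hcons, Hblk, Hth.
  - apply Hcons, mcs_Thm, Thm_ID; auto.
Qed.

Lemma normal_witness phi : x (emb phi) ->
  exists y, mcs y /\ same_conds y x /\ normal y phi /\ y (emb phi).
Proof.
  intro Hphi; destruct (cond_witness phi PBot) as [y [? [? [? [? _]]]]]; eauto using mcs_cond_bot.
Qed.

Lemma derivable_of_global chi :
  (forall y, mcs y -> same_conds y x -> y (emb chi)) -> derivable (literals x) (emb chi).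
Proof.
  intro H; apply NNPP; intro N.
  destruct (lindenbaum_not_derivable _ _ N) as [y [Hy [Hsub Ny]]].
  apply Ny, H, same_conds_of_literals; auto.
Qed.

(* Chernoff-style transfer of normality: if phi implies chi throughout the block,
   LL+ turns phi ~> th into (chi /\ phi) ~> th and SH into chi ~> (phi -> th). *)
Lemma normal_of_global_imp chi phi : normal x chi -> x (emb phi) ->
  (forall y, mcs y -> same_conds y x -> y (emb phi) -> y (emb chi)) -> normal x phi.
Proof.
  intros Hchi Hphi Himp th Hth.
  assert (D : derivable (literals x) (emb (PImp phi chi))).
  { apply derivable_of_global; intros y Hy Hblk; simpl; apply (mcs_imp y Hy), Himp; auto. }
  assert (Hcp : x (TCond (PAnd chi phi) th)).
  { apply (cond_equiv_of_global phi); auto.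
    apply derivable_taut_MP with (emb (PImp phi chi)); auto; solve_taut. }
  apply (mcs_MP x Hx _ _ (mcs_Thm x Hx _ (Thm_SH th chi phi))), Hchi in Hcp.
  exact (mcs_MP x Hx _ _ Hcp Hphi).
Qed.

End Block.

Lemma mcs_B_derivable x a : mcs x -> derivable (fun b => x (TB b)) a -> x (TB a).
Proof.
  intro Hx; induction 1 as [a Ha|a Ta|a b _ IH1 _ IH2]; auto.
  - apply (mcs_Thm x Hx), Thm_Nec, Ta.
  - apply (mcs_MP x Hx _ _ (mcs_MP x Hx _ _ (mcs_Thm x Hx _ (Thm_KB a b)) IH1)), IH2.
Qed.

Lemma mcs_B_consistent x : mcs x -> consistent (fun b => x (TB b)).
Proof.
  intros Hx D; apply (mcs_B_derivable x) in D; auto.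
  apply (mcs_MP x Hx _ _ (mcs_Thm x Hx _ (Thm_DB TBot))), (mcs_neg x Hx) in D; apply D.
  apply (mcs_Thm x Hx), Thm_Nec, Thm_taut; solve_taut.
Qed.

Record cstate : Type := CState {
  theory : tform -> Prop;
  theory_mcs : mcs theory;
  tag : pform
}.

Definition ccls (s : cstate) : pform -> pform -> Prop :=
  fun phi psi => theory s (TCond phi psi).

Definition cval (n : nat) (s : cstate) : Prop := theory s (TVar n).

Definition crel (s t : cstate) : Prop := forall b, theory s (TB b) -> theory t b.

Definition good (s : cstate) : Prop := normal (theory s) (tag s).

(* [cpref _ v s] is v >= s.  A bad phi-state is beaten by any good phi-state
   tagged phi; a good phi-state tagged c is beaten by any bad phi-state refuting
   c, e.g. one tagged PBot. *)
Definition cpref (_ : pform -> pform -> Prop) (v s : cstate) : Prop :=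
  (good s -> ~ theory v (emb (tag s))) /\ (~ good s -> good v /\ theory s (emb (tag v))).

Lemma ccls_eq s t : same_conds (theory s) (theory t) -> ccls s = ccls t.
Proof.
  intro H; apply functional_extensionality; intro phi; apply functional_extensionality; intro psi.
  apply propositional_extensionality, H.
Qed.

Lemma same_conds_of_ccls s t : ccls s = ccls t -> same_conds (theory s) (theory t).
Proof. intros H phi psi; change (ccls s phi psi <-> ccls t phi psi); rewrite H; tauto. Qed.

Lemma psat_cval s phi : psat cval s phi <-> theory s (emb phi).
Proof.
  pose proof (theory_mcs s) as Hs.
  induction phi; simpl.
  - split; [tauto | apply mcs_bot, Hs].
  - reflexivity.
  - rewrite (mcs_and _ Hs); tauto.
  - rewrite (mcs_or _ Hs); tauto.
  - rewrite (mcs_imp _ Hs); tauto.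
  - rewrite (mcs_iff _ Hs); tauto.
  - rewrite (mcs_neg _ Hs); tauto.
Qed.

Lemma ext_ccls s v phi :
  same_conds (theory v) (theory s) -> theory v (emb phi) -> ext ccls cval (ccls s) phi v.
Proof. intros Hblk Hphi; split; [apply ccls_eq, Hblk | apply psat_cval, Hphi]. Qed.

Lemma most_of_normal s y (Hy : mcs y) phi :
  same_conds y (theory s) -> normal y phi -> y (emb phi) ->
  most cpref (ccls s) (ext ccls cval (ccls s) phi) (CState y Hy phi).
Proof.
  intros Hblk Hnorm Hphi; split; [apply ext_ccls; auto|].
  intros v [_ Hv] [Hbeat _]; apply psat_cval in Hv; contradiction (Hbeat Hnorm).
Qed.

Lemma normal_of_most i phi s : most cpref i (ext ccls cval i phi) s -> normal (theory s) phi.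
Proof.
  intros [[<- Hphi] Hmost]; apply psat_cval in Hphi.
  pose proof (theory_mcs s) as Hs.
  assert (Hgood : good s).
  { apply NNPP; intro Nbad.
    destruct (normal_witness _ Hs phi Hphi) as [y [Hy [Hblk [Hnorm Hyphi]]]].
    destruct (Hmost (CState y Hy phi)) as [Hbeat _];
      [apply ext_ccls; auto | split; [tauto | auto] |].
    exact (Hbeat Hnorm Hphi). }
  apply (normal_of_global_imp _ Hs (tag s)); auto.
  intros y Hy Hblk Hyphi; apply NNPP; intro Ntag.
  destruct (Hmost (CState y Hy PBot)) as [_ Hback];
    [apply ext_ccls; auto | split; [auto | tauto] |].
  apply Ntag, Hback, (not_normal_bot y Hy).
Qed.

Lemma cmost_nonempty i phi :
  (exists s, ext ccls cval i phi s) -> exists s, most cpref i (ext ccls cval i phi) s.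
Proof.
  intros [s [<- Hphi]]; apply psat_cval in Hphi.
  destruct (normal_witness _ (theory_mcs s) phi Hphi) as [y [Hy [Hblk [Hnorm Hyphi]]]].
  exists (CState y Hy phi); apply most_of_normal; auto.
Qed.

Lemma crel_serial s : exists t, crel s t.
Proof.
  destruct (lindenbaum _ (mcs_B_consistent _ (theory_mcs s))) as [y [Hsub Hy]].
  exists (CState y Hy PBot); intros b Hb; apply Hsub, Hb.
Qed.

Lemma crel_trans s t u : crel s t -> crel t u -> crel s u.
Proof.
  intros Hst Htu b Hb; apply Htu, Hst.
  apply (mcs_MP _ (theory_mcs s) _ _ (mcs_Thm _ (theory_mcs s) _ (Thm_4B b))), Hb.
Qed.

Definition canonical_model : TrustModel :=
  {| St := cstate; Ix := pform -> pform -> Prop; cls := ccls; pref := cpref;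
     Rel := crel; Val := cval; Rel_serial := crel_serial; Rel_trans := crel_trans;
     most_nonempty := cmost_nonempty |}.

Lemma truth_cond s phi psi :
  tsat canonical_model s (TCond phi psi) <-> theory s (TCond phi psi).
Proof.
  pose proof (theory_mcs s) as Hs; simpl; split.
  - intro H; apply NNPP; intro N.
    destruct (cond_witness _ Hs phi psi N) as [y [Hy [Hblk [Hnorm [Hphi Npsi]]]]].
    destruct (H (CState y Hy phi)) as [_ Hpsi]; [apply most_of_normal; auto|].
    apply psat_cval in Hpsi; exact (Npsi Hpsi).
  - intros H v Hmost; pose proof Hmost as [[Hv _] _].
    split; [auto|]; apply psat_cval, (normal_of_most _ _ _ Hmost).
    apply (same_conds_of_ccls v s Hv), H.
Qed.

Lemma truth_B s a :
  (forall t, tsat canonical_model t a <-> theory t a) ->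
  tsat canonical_model s (TB a) <-> theory s (TB a).
Proof.
  intro IH; pose proof (theory_mcs s) as Hs; simpl; split.
  - intro H; apply NNPP; intro N.
    destruct (lindenbaum_not_derivable _ _ (fun D => N (mcs_B_derivable _ a Hs D)))
      as [y [Hy [Hsub Ny]]].
    apply Ny, (IH (CState y Hy PBot)), H; intros b Hb; apply Hsub, Hb.
  - intros H t Hst; apply IH, Hst, H.
Qed.

Lemma truth a s : tsat canonical_model s a <-> theory s a.
Proof.
  revert s; induction a; intro s; pose proof (theory_mcs s) as Hs;
    try solve [apply truth_cond | apply truth_B; auto]; simpl.
  - split; [tauto | apply mcs_bot, Hs].
  - reflexivity.
  - rewrite (mcs_and _ Hs), IHa1, IHa2; tauto.
  - rewrite (mcs_or _ Hs), IHa1, IHa2; tauto.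
  - rewrite (mcs_imp _ Hs), IHa1, IHa2; tauto.
  - rewrite (mcs_iff _ Hs), IHa1, IHa2; tauto.
  - rewrite (mcs_neg _ Hs), IHa; tauto.
Qed.

Theorem theorem5 (Phi : tform -> Prop) (a : tform) :
  entails Phi a -> derivable Phi a.
Proof.
  intro E; apply NNPP; intro N.
  destruct (lindenbaum_not_derivable _ _ N) as [x [Hx [Hsub Na]]].
  apply Na, (truth a (CState x Hx PBot)), E.
  intros b Hb; apply truth, Hsub, Hb.
Qed.
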